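(* Work without the expansion bound (an expanded side $a_i$ may take any length $a_i'\ge a_i$). Let $A_1,\dots,A_k$ be $n$-dimensional boxes and $\mathcal{O}$ a set of orders of them each of which is a possible arrangement, and fix states realizing each of these arrangements. Let $s$ be the closed length of one side of one box $A$, and let $x\le s\le y$ be numbers such that every other side length occurring — every other closed side length of every box, and every expanded side length in any of the fixed states — is either less than $x$ or greater than $y$. Then for any $r$ with $x\le r\le y$, the collection obtained by replacing this side length $s$ of $A$ by $r$ can be put in every order of $\mathcal{O}$.
   Context: An $n$-dimensional box $A$ has closed side lengths $a_1\le\dots\le a_n$ (positive reals). A state of $A$ is either closed or expanded along one side $i$: $a_i$ is replaced by a length $a_i'\ge a_i$, other sides unchanged (only one side can expand). The dimension vector of a state is its side lengths sorted non-decreasingly. A box in some state fits inside another box in some state if each coordinate of the outer one's dimension vector is strictly larger than the corresponding coordinate of the inner one's. An order $X_1,\dots,X_k$ (innermost to outermost) is a possible arrangement if each box can be given a state so that $X_j$ fits inside $X_{j+1}$ for all $j$; states may differ between arrangements. *)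

From mathcomp Require Import all_boot all_order all_algebra.
Set Implicit Arguments. Unset Strict Implicit. Unset Printing Implicit Defensive.
Import Order.TTheory GRing.Theory Num.Theory.
Local Open Scope ring_scope.

Section Boxes.
Variable R : realFieldType.
Variable n : nat.

(* A box is given by its closed side lengths, indexed by 'I_n. *)
(* A state: None = closed; Some (i, l) = expanded along side i to length l. *)
Definition state := option ('I_n * R).

Definition valid_state (a : 'I_n -> R) (st : state) : Prop :=
  match st with None => True | Some (i, l) => a i <= l end.

Definition side_len (a : 'I_n -> R) (st : state) (i : 'I_n) : R :=
  match st with
  | None => a i
  | Some (j, l) => if i == j then l else a i
  end.

Definition dimvec (a : 'I_n -> R) (st : state) : seq R :=
  sort <=%R [seq side_len a st i | i <- enum 'I_n].

Definition fitsb (u v : seq R) : bool :=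
  all (fun m => nth 0 u m < nth 0 v m) (iota 0 n).

Variable k : nat.

Definition is_order (o : seq 'I_k) : Prop := perm_eq o (enum 'I_k).

Definition realizes (A : 'I_k -> 'I_n -> R) (o : seq 'I_k) (st : 'I_k -> state) : Prop :=
  (forall j, valid_state (A j) (st j)) /\
  sorted (fun j1 j2 => fitsb (dimvec (A j1) (st j1)) (dimvec (A j2) (st j2))) o.

Definition possible_arrangement (A : 'I_k -> 'I_n -> R) (o : seq 'I_k) : Prop :=
  exists st : 'I_k -> state, realizes A o st.

Definition replace_side (A : 'I_k -> 'I_n -> R) (j0 : 'I_k) (i0 : 'I_n) (r : R) :
  'I_k -> 'I_n -> R :=
  fun j i => if (j == j0) && (i == i0) then r else A j i.

End Boxes.

From mathcomp Require Import all_boot all_order all_algebra.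
From mathcomp Require Import lra.
Set Implicit Arguments. Unset Strict Implicit. Unset Printing Implicit Defensive.
Import Order.TTheory GRing.Theory Num.Theory.
Local Open Scope ring_scope.

(* Keep all the given states and let [collapse] send every length
   in [x, y] to r and fix every other length.  This map is monotone, so it
   commutes with sorting, and the new dimension vectors are the images of the
   old ones.  The only length in [x, y] is the side s of A, so of two distinct
   boxes at most one has a coordinate in [x, y], and a strict inequality
   u < v with at most one of u, v in [x, y] survives the collapse. *)

Section Collapse.

Variables (R : realDomainType) (x y r : R).
Hypothesis r_in : x <= r <= y.

Definition collapse (t : R) : R := if x <= t <= y then r else t.

Lemma collapse_out t : t < x \/ y < t -> collapse t = t.
Proof. by rewrite /collapse; case: ifP => // /andP[] *; lra. Qed.

Lemma collapse_homo : {homo collapse : a b / a <= b}.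
Proof.
move: r_in => /andP[xr ry] a b ab; rewrite /collapse.
by case: ifP => /andP ha; case: ifP => /andP hb //;
  [ move: hb => /andP; rewrite negb_and -!ltNge => /orP[] hb
  | move: ha => /andP; rewrite negb_and -!ltNge => /orP[] ha ]; lra.
Qed.

Lemma collapse_lt u v :
  ~~ ((x <= u <= y) && (x <= v <= y)) -> u < v -> collapse u < collapse v.
Proof.
move: r_in => /andP[xr ry]; rewrite /collapse => not_both uv.
case: ifP => hu; case: ifP => hv //; first by rewrite hu hv in not_both.
- by move: hu hv => /andP[] ? ? /negbT; rewrite negb_and -!ltNge => /orP[]; lra.
- by move: hu hv => /negbT; rewrite negb_and -!ltNge => /orP[] ? /andP[]; lra.
Qed.

End Collapse.

Lemma sort_map_homo d (T : orderType d) (f : T -> T) (s : seq T) :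
  {homo f : a b / (a <= b)%O} ->
  sort <=%O (map f s) = map f (sort <=%O s).
Proof.
move=> f_homo; apply: le_sorted_eq; first exact: sort_le_sorted.
- by rewrite sorted_map; apply: sub_sorted (sort_le_sorted s) => a b /f_homo.
- by rewrite perm_sort perm_sym perm_map // perm_sort.
Qed.

Lemma sorted_uniq_neq (T : eqType) (e : rel T) (s : seq T) :
  uniq s -> sorted e s -> sorted (fun a b => (a != b) && e a b) s.
Proof.
case: s => // a s; elim: s a => // b t IH a /= /andP[a_notin s_uniq].
move=> /andP[eab t_path]; rewrite eab andbT; apply/andP; split; last exact: IH.
by apply: contraNneq a_notin => ->; rewrite mem_head.
Qed.

Section DimensionVectors.

Variables (R : realFieldType) (n : nat).

Lemma size_dimvec (a : 'I_n -> R) (st : state R n) : size (dimvec a st) = n.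
Proof. by rewrite size_sort size_map size_enum_ord. Qed.

Lemma mem_dimvec (a : 'I_n -> R) (st : state R n) t :
  t \in dimvec a st -> exists i, t = side_len a st i.
Proof. by rewrite mem_sort => /mapP[i _ ->]; exists i. Qed.

Lemma dimvec_map (a b : 'I_n -> R) (st st' : state R n) (f : R -> R) :
  {homo f : u v / u <= v} ->
  (forall i, side_len b st' i = f (side_len a st i)) ->
  dimvec b st' = map f (dimvec a st).
Proof.
move=> f_homo side_b; rewrite /dimvec -sort_map_homo //; congr sort.
by rewrite -[in RHS]map_comp; apply: eq_map.
Qed.

Lemma fitsb_map (f : R -> R) (u v : seq R) :
  size u = n -> size v = n ->
  {in u & v, forall a b, a < b -> f a < f b} ->
  fitsb n u v -> fitsb n (map f u) (map f v).
Proof.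
move=> size_u size_v f_lt /allP uv; apply/allP => m m_in.
have m_lt : (m < n)%N by rewrite mem_iota in m_in.
rewrite !(nth_map 0) ?size_u ?size_v //.
by apply: f_lt (uv m m_in); apply: mem_nth; rewrite ?size_u ?size_v.
Qed.

End DimensionVectors.

Section ReplaceSide.

Variables (R : realFieldType) (n k : nat).
Variables (A : 'I_k -> 'I_n -> R) (S : 'I_k -> state R n).
Variables (j0 : 'I_k) (i0 : 'I_n) (x y r : R).
Hypothesis s_in : x <= A j0 i0 <= y.
Hypothesis sides_out : forall j i, (j, i) != (j0, i0) -> A j i < x \/ y < A j i.
Hypothesis expanded_out : forall j i l, S j = Some (i, l) -> l < x \/ y < l.
Hypothesis r_in : x <= r <= y.

Let A' := replace_side A j0 i0 r.

Lemma side_len_in_box j i : x <= side_len (A j) (S j) i <= y -> j = j0.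
Proof.
have out_bad t : t < x \/ y < t -> x <= t <= y -> j = j0.
  by move=> t_out /andP[? ?]; exfalso; case: t_out; lra.
have closed_in : x <= A j i <= y -> j = j0.
  by have [/eqP[-> _] //|/sides_out/out_bad] := boolP ((j, i) == (j0, i0)).
rewrite /side_len; case Sj: (S j) => [[i1 l]|] //; case: ifP => // _.
by apply: out_bad; exact: expanded_out Sj.
Qed.

Lemma side_len_replace j i :
  side_len (A' j) (S j) i = collapse x y r (side_len (A j) (S j) i).
Proof.
have replaced : A' j i = collapse x y r (A j i).
  rewrite /A' /replace_side; case: ifP => [/andP[/eqP-> /eqP->]|j0i0].
    by rewrite /collapse s_in.
  by rewrite collapse_out //; apply: sides_out; rewrite xpair_eqE j0i0.
rewrite /side_len; case Sj: (S j) => [[i1 l]|]; last exact: replaced.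
case: ifP => _; last exact: replaced.
by rewrite collapse_out //; exact: expanded_out Sj.
Qed.

Lemma dimvec_replace j :
  dimvec (A' j) (S j) = map (collapse x y r) (dimvec (A j) (S j)).
Proof. by apply: dimvec_map; [exact: collapse_homo | exact: side_len_replace]. Qed.

Lemma valid_state_replace j : valid_state (A j) (S j) -> valid_state (A' j) (S j).
Proof.
rewrite /valid_state /A' /replace_side; case Sj: (S j) => [[i1 l]|] //.
case: ifP => // /andP[/eqP ej /eqP ei]; subst j i1 => Al.
by move: s_in r_in => /andP[? ?] /andP[? ?]; case: (expanded_out Sj); lra.
Qed.

Lemma fitsb_replace j1 j2 : j1 != j2 ->
  fitsb n (dimvec (A j1) (S j1)) (dimvec (A j2) (S j2)) ->
  fitsb n (dimvec (A' j1) (S j1)) (dimvec (A' j2) (S j2)).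
Proof.
move=> j12; rewrite !dimvec_replace; apply: fitsb_map; rewrite ?size_dimvec //.
move=> _ _ /mem_dimvec[i1 ->] /mem_dimvec[i2 ->].
apply: collapse_lt => //.
by apply: contra j12 => /andP[/side_len_in_box-> /side_len_in_box->].
Qed.

End ReplaceSide.

Theorem proposition26 (R : realFieldType) (n k : nat)
  (A : 'I_k -> 'I_n -> R) (O : seq 'I_k -> Prop)
  (st : seq 'I_k -> 'I_k -> state R n)
  (j0 : 'I_k) (i0 : 'I_n) (x y r : R) :
  (forall j i, 0 < A j i) ->
  (forall o, O o -> is_order o) ->
  (forall o, O o -> realizes A o (st o)) ->
  x <= A j0 i0 <= y ->
  (forall j i, (j, i) != (j0, i0) -> A j i < x \/ y < A j i) ->
  (forall o, O o -> forall j i l, st o j = Some (i, l) -> l < x \/ y < l) ->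
  x <= r <= y ->
  forall o, O o -> possible_arrangement (replace_side A j0 i0 r) o.
Proof.
move=> _ orders realized s_in sides_out expanded_out r_in o Oo.
have [valid fits] := realized o Oo.
have o_uniq : uniq o by rewrite (perm_uniq (orders o Oo)) enum_uniq.
exists (st o); split=> [j|].
  exact: valid_state_replace (expanded_out o Oo) r_in j (valid j).
apply: sub_sorted (sorted_uniq_neq o_uniq fits) => j1 j2 /andP[j12].
exact: fitsb_replace (expanded_out o Oo) r_in j1 j2 j12.
Qed.
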